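(* Let $n\ge1$, $\mu\in(0,1)$ and $\eta>4\mu n^2$. Let $x_*=(1+\eta,1+\frac\eta2,\dots,1+\frac\eta n)$, $\hat f(x)=\|x-x_*\|_\infty$ and $f_\mu(x)=\min_{u\in\mathbb{R}^n}\hat f(u)+\frac1{2\mu}\|x-u\|^2$. Let $p\in\{0,\dots,n-1\}$. For any $x\in\mathbb{R}^n$ with $\max_{i=p+1,\dots,n}|x^{(i)}|\le\mu$, we have $\nabla f_\mu(x)\in E_{p+1}$ and $\|\nabla f_\mu(x)\|_\infty\le 1$.
   Context: $(e_1,\dots,e_n)$ is the canonical basis of $\mathbb{R}^n$, $E_p=\operatorname{Span}(e_1,\dots,e_p)$ for $p\ge1$ and $E_0=\{0\}$. $\|\cdot\|$ is the Euclidean norm; $x^{(i)}$ is the $i$-th coordinate. $f_\mu$ (the Moreau envelope of $\hat f$) is differentiable. *)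

From HB Require Import structures.
From mathcomp Require Import all_boot all_order all_algebra.
From mathcomp Require Import all_classical all_reals all_analysis.
Set Implicit Arguments. Unset Strict Implicit. Unset Printing Implicit Defensive.
Import Order.TTheory GRing.Theory Num.Theory.
Import numFieldNormedType.Exports.
Local Open Scope ring_scope.
Local Open Scope classical_set_scope.

Section Defs.
Variable R : realType.
Variable n : nat.

(* the point x_* = (1+eta, 1+eta/2, ..., 1+eta/n); coordinate i (0-based) is 1 + eta/(i+1) *)
Definition xstar (eta : R) : 'rV[R]_n := \row_(i < n) (1 + eta / (i.+1)%:R).

Definition infnorm (x : 'rV[R]_n) : R := \big[Num.max/0]_(i < n) `|x 0 i|.

Definition sqnorm2 (x : 'rV[R]_n) : R := \sum_(i < n) (x 0 i) ^+ 2.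

Definition fhat (eta : R) (x : 'rV[R]_n) : R := infnorm (x - xstar eta).

(* Moreau envelope f_mu(x) = min_u hat f(u) + 1/(2 mu) ||x - u||^2 (the min is attained,
   so it equals the infimum) *)
Definition fmu (eta mu : R) (x : 'rV[R]_n) : R :=
  inf [set fhat eta u + (2 * mu)^-1 * sqnorm2 (x - u) | u in [set: 'rV[R]_n]].

Definition grad (f : 'rV[R]_n -> R) (x : 'rV[R]_n) : 'rV[R]_n :=
  \row_(i < n) ('d f x) (delta_mx 0 i).

(* E_p = Span(e_1,...,e_p): all coordinates of 1-based index > p (0-based index >= p) vanish *)
Definition in_Espace (p : nat) (x : 'rV[R]_n) : Prop := forall i : 'I_n, (p <= i)%N -> x 0 i = 0.

End Defs.

From HB Require Import structures.
From mathcomp Require Import all_boot all_order all_algebra.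
From mathcomp Require Import all_classical all_reals all_analysis.
From mathcomp Require Import ring lra.
Import Order.TTheory GRing.Theory Num.Theory.
Import numFieldNormedType.Exports.
Local Open Scope ring_scope.

(* The Moreau envelope of any h is differentiable at x with gradient g as soon
   as g is a subgradient of h at the proximal point x - mu g: the envelope is
   then squeezed between an affine function and the same function plus a
   quadratic, both touching it at x.  For h = ||. - x_*||_oo and z = x - x_*,
   the proximal point is x_* + clip_t(z), the coordinatewise projection of z
   onto [-t, t], where t is chosen so that the soft-thresholded residual
   z - clip_t(z) has l1-norm mu.  Hence g = (z - clip_t(z)) / mu has l1-norm 1
   and in particular ||g||_oo <= 1.  The coordinates of x_* decrease by more
   than eta / n^2 > 4 mu from one index to the next, so when the tail of x is
   bounded by mu, every |z_j| with j > p + 1 lies below |z_(p+1)| - 2 mu < t,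
   and g_j = 0. *)

Section Clip.
Context {R : realDomainType}.
Variable t : R.
Hypothesis t_ge0 : 0 <= t.

Definition clip (a : R) : R := Num.max (- t) (Num.min t a).

Definition soft_threshold (a : R) : R := a - clip a.

Variant clip_spec (a : R) : R -> Prop :=
  | ClipTop of t <= a : clip_spec a t
  | ClipMid of `|a| <= t : clip_spec a a
  | ClipBot of a <= - t : clip_spec a (- t).

Lemma clipP a : clip_spec a (clip a).
Proof.
(* [lra] ignores section hypotheses, hence the local copies [t0], [mu0]. *)
have t0 := t_ge0; have Nt_le_t : - t <= t by lra.
rewrite /clip; have [t_le_a|a_lt_t] := lerP t a; first by rewrite max_r //; apply: ClipTop.
have [Nt_le_a|a_lt_Nt] := lerP (- t) a.
  by apply: ClipMid; rewrite ler_norml Nt_le_a ltW.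
by apply: ClipBot; rewrite ltW.
Qed.

Lemma norm_clip_le a : `|clip a| <= t.
Proof. by case: clipP => // _; rewrite ?normrN ger0_norm. Qed.

Lemma norm_soft_threshold a : `|soft_threshold a| = Num.max (`|a| - t) 0.
Proof.
have t0 := t_ge0; rewrite /soft_threshold; case: clipP => [t_le_a | a_le_t | a_le_Nt].
- by rewrite !ger0_norm ?max_l; lra.
- by rewrite subrr normr0 max_r // subr_le0.
- by rewrite !ler0_norm ?max_l; lra.
Qed.

Lemma soft_threshold_mul_clip a : soft_threshold a * clip a = t * `|soft_threshold a|.
Proof.
have t0 := t_ge0; rewrite /soft_threshold; case: clipP => [t_le_a | _ | a_le_Nt].
- by rewrite ger0_norm; lra.
- by rewrite subrr normr0 mul0r mulr0.
- by rewrite ler0_norm; lra.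
Qed.

Lemma soft_threshold_eq0 a : `|a| <= t -> soft_threshold a = 0.
Proof.
by move=> a_le_t; apply/normr0_eq0; rewrite norm_soft_threshold max_r // subr_le0.
Qed.

End Clip.

Lemma ler_sum_term {R : numDomainType} {I : finType} (F : I -> R) j :
  (forall i, 0 <= F i) -> F j <= \sum_i F i.
Proof. by move=> F_ge0; rewrite (bigD1 j) //= lerDl sumr_ge0. Qed.

Lemma exists_threshold {R : realType} {I : finType} (a : I -> R) mu :
  0 <= mu <= \sum_i a i -> (forall i, 0 <= a i) ->
  exists2 t, 0 <= t & \sum_i Num.max (a i - t) 0 = mu.
Proof.
move=> /andP[mu_ge0 mu_le] a_ge0.
pose excess t := \sum_i Num.max (a i - t) 0.
have excess_cont : continuous excess.
  have -> : excess = \sum_i (fun t => Num.max (a i - t) 0) by rewrite fct_sumE.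
  move=> t; elim/big_ind: _ => [|f1 f2|i _]; first exact: cst_continuous.
    exact: continuousD.
  apply: (@continuous_max _ _ (fun t => a i - t) (cst 0)).
    by apply: cvgB; [exact: cvg_cst | exact: cvg_id].
  exact: cst_continuous.
have sum_ge0 : 0 <= \sum_i a i by exact: sumr_ge0.
have excess0 : excess 0 = \sum_i a i.
  by apply: eq_bigr => i _; rewrite subr0 max_l.
have excess_sum : excess (\sum_i a i) = 0.
  by rewrite /excess big1 // => i _; rewrite max_r // subr_le0 ler_sum_term.
have [t /andP[t_ge0 _] excess_t] : exists2 t, t \in `[0, \sum_i a i] & excess t = mu.
  apply: IVT => //; first exact: continuous_subspaceT.
  by rewrite excess0 excess_sum (min_r sum_ge0) (max_l sum_ge0) mu_ge0 mu_le.
by exists t.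
Qed.

Lemma differentiable_sandwich {R : realFieldType} {V : normedModType R} (f : V -> R)
    (L : {linear V -> R}) (C : R) x :
  continuous L -> 0 <= C ->
  (forall y, f x + L (y - x) <= f y <= f x + L (y - x) + C * `|y - x| ^+ 2) ->
  differentiable f x /\ 'd f x = L :> (V -> R).
Proof.
move=> L_cont C_ge0 sandwich.
suff f_lin : f \o shift x = cst (f x) + L +o_ 0 id.
  by have dfE := diff_unique L_cont f_lin; split=> //; apply/diff_locallyP; rewrite dfE.
apply/eqaddoP => eps eps_gt0.
near=> h.
have /andP[lo hi] := sandwich (h + x); rewrite addrK in lo hi.
have h_small : `|h| * (C + 1) <= eps.
  rewrite -ler_pdivlMr ?ltr_wpDl //; near: h; apply: nbhs0_le.
  by rewrite divr_gt0 // ltr_wpDl.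
have h_ge0 : 0 <= `|h| := normr_ge0 h.
have -> : (f \o shift x - (cst (f x) + L)) h = f (h + x) - (f x + L h) by [].
rewrite ler_norml; apply/andP; split; nra.
Unshelve. all: by end_near.
Qed.

Section Moreau.
Context {R : realType} {n : nat}.
Implicit Types (g w x y : 'rV[R]_n) (h : 'rV[R]_n -> R).

Definition dotv g y : R := \sum_i g 0 i * y 0 i.

Lemma dotv_is_linear g : linear (dotv g).
Proof.
move=> a y z; rewrite /dotv scaler_sumr -big_split /=.
by apply: eq_bigr => i _; rewrite !mxE mulrDr mulrCA.
Qed.

HB.instance Definition _ g :=
  GRing.isLinear.Build R 'rV[R]_n R *:%R (dotv g) (dotv_is_linear g).

Lemma continuous_dotv g : continuous (dotv g).
Proof.
move=> y; apply: differentiable_continuous.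
have -> : dotv g = \sum_i (g 0 i *: (fun y : 'rV[R]_n => y 0 i)).
  by apply/funext => z; rewrite /dotv fct_sumE; apply: eq_bigr.
apply: differentiable_sum => i; apply: differentiableZ.
exact: differentiable_coord.
Qed.

Lemma dotv_delta g i : dotv g (delta_mx 0 i) = g 0 i.
Proof.
rewrite /dotv (bigD1 i) //= big1 => [|j ji]; first by rewrite mxE !eqxx mulr1 addr0.
by rewrite mxE eqxx /= (negbTE ji) mulr0.
Qed.

Lemma norm_coord_le_mx_norm y i : `|y 0 i| <= `|y|.
Proof.
rewrite [leRHS]/Num.norm /= mx_normrE.
exact: (le_bigmax _ (fun ij : 'I_1 * 'I_n => `|y ij.1 ij.2|) (0, i)).
Qed.

Lemma sqnorm2_le_mx_norm y : sqnorm2 y <= n%:R * `|y| ^+ 2.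
Proof.
rewrite (_ : _ * _ = \sum_(i < n) `|y| ^+ 2); last by rewrite sumr_const card_ord mulr_natl.
apply: ler_sum => i _.
by rewrite -real_normK ?num_real // lerXn2r ?nnegrE // norm_coord_le_mx_norm.
Qed.

(* [fmu eta mu] is [moreau (fhat eta) mu]. *)
Definition moreau h mu x : R :=
  inf [set h u + (2 * mu)^-1 * sqnorm2 (x - u) | u in [set: 'rV[R]_n]].

Section Subgradient.
Variables (h : 'rV[R]_n -> R) (mu : R) (x g : 'rV[R]_n).
Hypothesis mu_gt0 : 0 < mu.
Let u := x - mu *: g.
Hypothesis g_subgradient : forall w, h u + dotv g (w - u) <= h w.
Let v := h u + (2 * mu)^-1 * sqnorm2 (x - u).

Lemma moreau_objective_ge_affine y w :
  v + dotv g (y - x) <= h w + (2 * mu)^-1 * sqnorm2 (y - w).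
Proof.
have mu0 := mu_gt0.
have gap : (2 * mu)^-1 * sqnorm2 (y - w) + dotv g (w - u)
    - (2 * mu)^-1 * sqnorm2 (x - u) - dotv g (y - x)
    = \sum_i (2 * mu)^-1 * (mu * g 0 i + w 0 i - y 0 i) ^+ 2.
  rewrite /sqnorm2 /dotv !mulr_sumr -big_split -!sumrB /=.
  by apply: eq_bigr => i _; rewrite /u !mxE; field; lra.
have : 0 <= \sum_i (2 * mu)^-1 * (mu * g 0 i + w 0 i - y 0 i) ^+ 2.
  by apply: sumr_ge0 => i _; rewrite mulr_ge0 ?sqr_ge0 // invr_ge0; lra.
have := g_subgradient w; rewrite /v; lra.
Qed.

Lemma moreau_objective_prox y : h u + (2 * mu)^-1 * sqnorm2 (y - u)
  = v + dotv g (y - x) + (2 * mu)^-1 * sqnorm2 (y - x).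
Proof.
have mu0 := mu_gt0.
rewrite /v -!addrA; congr (_ + _).
rewrite /sqnorm2 /dotv !mulr_sumr -!big_split /=.
by apply: eq_bigr => i _; rewrite /u !mxE; field; lra.
Qed.

Lemma moreau_sandwich y : v + dotv g (y - x) <= moreau h mu y
  <= v + dotv g (y - x) + (2 * mu)^-1 * sqnorm2 (y - x).
Proof.
apply/andP; split.
  apply: lb_le_inf; first by exists (h 0 + (2 * mu)^-1 * sqnorm2 (y - 0)), 0.
  by move=> _ [w _ <-]; exact: moreau_objective_ge_affine.
rewrite -moreau_objective_prox; apply: ge_inf; last by exists u.
by exists (v + dotv g (y - x)) => _ [w _ <-]; exact: moreau_objective_ge_affine.
Qed.

Lemma moreau_prox_value : moreau h mu x = v.
Proof.
have sqnorm2_0 : sqnorm2 (0 : 'rV[R]_n) = 0.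
  by rewrite /sqnorm2 big1 // => i _; rewrite mxE expr0n.
have := moreau_sandwich x; rewrite subrr raddf0 sqnorm2_0 mulr0 !addr0.
by move=> /andP[lo hi]; apply/le_anti; rewrite lo hi.
Qed.

Lemma moreau_gradient :
  differentiable (moreau h mu) x /\ grad (moreau h mu) x = g.
Proof.
have mu0 := mu_gt0.
have [f_diff dE] : differentiable (moreau h mu) x /\ 'd (moreau h mu) x = dotv g :> (_ -> _).
  apply: (@differentiable_sandwich R _ _ (dotv g) ((2 * mu)^-1 * n%:R) _ (continuous_dotv g)).
    by rewrite mulr_ge0 // invr_ge0 mulr_ge0 // ltW.
  move=> y; rewrite moreau_prox_value.
  have /andP[lo hi] := moreau_sandwich y; rewrite lo /= (le_trans hi) // -mulrA lerD2l.
  by rewrite ler_wpM2l ?sqnorm2_le_mx_norm // invr_ge0 mulr_ge0 // ltW.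
by split=> //; apply/rowP => i; rewrite mxE dE dotv_delta.
Qed.

End Subgradient.

End Moreau.

Section InfnormProx.
Context {R : realType} {n : nat}.
Implicit Types (c d u w x : 'rV[R]_n).

Lemma norm_coord_le_infnorm x i : `|x 0 i| <= infnorm x.
Proof. exact: (le_bigmax _ (fun i => `|x 0 i|)). Qed.

Lemma infnorm_subgradient c u d t :
  infnorm (u - c) <= t -> (forall i, d 0 i * (u - c) 0 i = t * `|d 0 i|) ->
  \sum_i `|d 0 i| = 1 ->
  forall w, infnorm (u - c) + dotv d (w - u) <= infnorm (w - c).
Proof.
move=> u_le align d_norm1 w.
have : dotv d (w - u) <= \sum_i `|d 0 i| * (infnorm (w - c) - t).
  apply: ler_sum => i _.
  have -> : (w - u) 0 i = (w - c) 0 i - (u - c) 0 i by rewrite !mxE; ring.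
  rewrite mulrBr align [t * _]mulrC mulrBr lerD2r.
  rewrite (le_trans (ler_norm _)) // normrM ler_wpM2l //.
  exact: norm_coord_le_infnorm.
rewrite -mulr_suml d_norm1 mul1r; lra.
Qed.

Definition soft_thresholdv t x : 'rV[R]_n := \row_i soft_threshold t (x 0 i).

Lemma moreau_infnorm_gradient c x mu t : 0 < mu -> 0 <= t ->
  \sum_i Num.max (`|(x - c) 0 i| - t) 0 = mu ->
  differentiable (moreau (fun w => infnorm (w - c)) mu) x /\
  grad (moreau (fun w => infnorm (w - c)) mu) x = mu^-1 *: soft_thresholdv t (x - c).
Proof.
move=> mu_gt0 t_ge0 excess_mu; apply: moreau_gradient => //.
set g := mu^-1 *: _.
have prox_clip i : (x - mu *: g - c) 0 i = clip t ((x - c) 0 i).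
  by rewrite /g scalerA mulfV ?gt_eqF // scale1r !mxE /soft_threshold; ring.
apply: (infnorm_subgradient _ _ _ t).
- by apply: bigmax_le => // i _; rewrite prox_clip norm_clip_le.
- move=> i; rewrite prox_clip /g 2!mxE normrM gtr0_norm ?invr_gt0 //.
  by rewrite -mulrA soft_threshold_mul_clip // mulrCA.
- under eq_bigr do rewrite /g 2!mxE normrM gtr0_norm ?invr_gt0 // norm_soft_threshold //.
  by rewrite -mulr_sumr excess_mu mulVf ?gt_eqF.
Qed.

End InfnormProx.

Lemma ler_wdivn {R : numFieldType} (eta : R) (a b : nat) :
  0 <= eta -> (0 < a <= b)%N -> eta / b%:R <= eta / a%:R.
Proof.
move=> eta_ge0 /andP[a_gt0 a_le_b].
by rewrite ler_wpM2l // lef_pV2 ?ler_nat ?posrE ?ltr0n // (leq_trans a_gt0).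
Qed.

Lemma divn_sub_divn_ge {R : numFieldType} (eta : R) (a b : nat) :
  0 <= eta -> (0 < a < b)%N -> eta / (a * b)%:R <= eta / a%:R - eta / b%:R.
Proof.
move=> eta_ge0 /andP[a_gt0 a_lt_b]; have b_gt0 : (0 < b)%N by rewrite (ltn_trans a_gt0 a_lt_b).
have -> : eta / a%:R - eta / b%:R = eta * (b - a)%:R / (a * b)%:R.
  by rewrite natrB ?(ltnW a_lt_b) // natrM; field; rewrite !pnatr_eq0 -!lt0n a_gt0 b_gt0.
by rewrite ler_pM2r ?invr_gt0 ?ltr0n ?muln_gt0 ?a_gt0 // ler_peMr // ler1n subn_gt0.
Qed.

Section StartingPoint.
Context {R : realType} {n : nat}.
Variables (eta mu : R) (x : 'rV[R]_n).

Lemma xstar_dist_bounds (i : 'I_n) : 0 <= eta -> `|x 0 i| <= mu ->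
  1 + eta / i.+1%:R - mu <= `|(x - xstar n eta) 0 i| <= 1 + eta / i.+1%:R + mu.
Proof.
move=> eta_ge0 x_i_le; rewrite !mxE; set a := 1 + eta / i.+1%:R.
have a_ge0 : 0 <= a by rewrite addr_ge0 ?divr_ge0.
have := lerB_dist a (x 0 i); have := ler_normB (x 0 i) a.
rewrite distrC (ger0_norm a_ge0) => hi lo.
by apply/andP; split; lra.
Qed.

Hypotheses (mu_gt0 : 0 < mu) (n_gt0 : (0 < n)%N).
Hypothesis eta_large : 4 * mu * (n ^ 2)%:R < eta.

Let eta_ge0 : 0 <= eta.
Proof. by apply: ltW; rewrite (lt_trans _ eta_large) // !mulr_gt0 ?ltr0n ?expn_gt0 ?n_gt0. Qed.

Let mu_lt_eta_n : 4 * mu < eta / (n ^ 2)%:R.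
Proof. by rewrite ltr_pdivlMr ?ltr0n ?expn_gt0 ?n_gt0. Qed.

Lemma xstar_dist_gt (i : 'I_n) : `|x 0 i| <= mu -> mu < `|(x - xstar n eta) 0 i|.
Proof.
move=> x_i_le; have /andP[z_i_lo _] := xstar_dist_bounds i eta_ge0 x_i_le.
have : eta / (n ^ 2)%:R <= eta / i.+1%:R.
  by apply: ler_wdivn => //=; rewrite (leq_trans (ltn_ord i)) // -mulnn leq_pmulr.
move: mu_lt_eta_n z_i_lo; have := mu_gt0.
set eta_i := eta / i.+1%:R; set eta_n := eta / _; lra.
Qed.

Lemma xstar_dist_gap (i j : 'I_n) : (i < j)%N -> `|x 0 i| <= mu -> `|x 0 j| <= mu ->
  `|(x - xstar n eta) 0 j| + 2 * mu < `|(x - xstar n eta) 0 i|.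
Proof.
move=> i_lt_j x_i_le x_j_le.
have harmonic_gap : eta / (n ^ 2)%:R <= eta / i.+1%:R - eta / j.+1%:R.
  apply: (@le_trans _ _ (eta / (i.+1 * j.+1)%:R)).
    by apply: ler_wdivn => //; rewrite muln_gt0 /= -mulnn leq_mul.
  by apply: divn_sub_divn_ge => //; rewrite ltnS.
have /andP[z_i_lo _] := xstar_dist_bounds i eta_ge0 x_i_le.
have /andP[_ z_j_hi] := xstar_dist_bounds j eta_ge0 x_j_le.
move: harmonic_gap mu_lt_eta_n z_i_lo z_j_hi.
set eta_i := eta / i.+1%:R; set eta_j := eta / j.+1%:R; set eta_n := eta / _; lra.
Qed.

End StartingPoint.

Theorem lemma3p5 (R : realType) (n : nat) (mu eta : R) (p : nat) (x : 'rV[R]_n) :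
  (0 < n)%N -> 0 < mu -> mu < 1 -> 4 * mu * (n ^ 2)%:R < eta ->
  (p < n)%N ->
  (forall i : 'I_n, (p <= i)%N -> `|x 0 i| <= mu) ->
  differentiable (fmu eta mu) x /\
  in_Espace (p.+1) (grad (fmu eta mu) x) /\
  infnorm (grad (fmu eta mu) x) <= 1.
Proof.
move=> n_gt0 mu_gt0 _ eta_large p_lt_n x_tail_le.
pose ip := Ordinal p_lt_n.
set z := x - xstar n eta.
have tail_gap (j : 'I_n) : (p < j)%N -> `|z 0 j| + 2 * mu < `|z 0 ip|.
  by move=> p_lt_j; apply: xstar_dist_gap; rewrite // x_tail_le // ltnW.
have z_p_gt : mu < `|z 0 ip| by apply/xstar_dist_gt/x_tail_le.
have [t t_ge0 excess_t] : exists2 t, 0 <= t & \sum_i Num.max (`|z 0 i| - t) 0 = mu.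
  apply: exists_threshold => //; rewrite ltW //=.
  exact: le_trans (ltW z_p_gt) (ler_sum_term (fun i => `|z 0 i|) _ _).
have excess_le i : Num.max (`|z 0 i| - t) 0 <= mu.
  by rewrite -excess_t; apply: ler_sum_term => k; rewrite le_max lexx orbT.
have [f_diff ->] :
    differentiable (fmu eta mu) x /\ grad (fmu eta mu) x = mu^-1 *: soft_thresholdv t z.
  exact: moreau_infnorm_gradient.
split=> //; split.
  move=> j p_lt_j; rewrite 2!mxE soft_threshold_eq0 ?mulr0 //.
  have := excess_le ip; rewrite ge_max => /andP[t_ge _].
  have := tail_gap j p_lt_j; lra.
apply: bigmax_le => // i _.
by rewrite 2!mxE normrM gtr0_norm ?invr_gt0 // norm_soft_threshold // ler_pdivrMl // mulr1 excess_le.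
Qed.
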